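(* Let $\mathbb K$ be a field of characteristic $\ne2$, $D\in\mathbb K[X]$ non-square of even degree with leading coefficient a square, and $\sqrt D\in\mathbb K((X^{-1}))$ fixed. Let $\alpha\in\mathbb K(X,\sqrt D)\subset\mathbb K((X^{-1}))$ be $\sigma$-reduced with $\alpha+\sigma(\alpha)\in\mathbb K[X]$. If the continued fraction of $\alpha$ is quasi-periodic, then it is pure periodic, i.e. there is $l\ge1$ with $a_n=a_{n+l}$ for all $n\ge0$.
   Context: $\operatorname{ord}$ is the valuation on $\mathbb K((X^{-1}))$ with $\operatorname{ord}(\sum_{n\le N}t_nX^n)=-N$ if $t_N\ne0$; $\lfloor\beta\rfloor$ is the unique polynomial with $\operatorname{ord}(\beta-\lfloor\beta\rfloor)>0$. Continued fraction: $\alpha_0=\alpha$, $\alpha_{n+1}=1/(\alpha_n-\lfloor\alpha_n\rfloor)$, $a_n=\lfloor\alpha_n\rfloor$. $\sigma$ is the nontrivial $\mathbb K(X)$-automorphism of $\mathbb K(X,\sqrt D)$, $\sigma(\sqrt D)=-\sqrt D$. An element $\alpha\in\mathbb K(X,\sqrt D)$ is $\sigma$-reduced if $\operatorname{ord}(\sigma(\alpha))>0>\operatorname{ord}(\alpha)$. Quasi-periodic: there exist $m\ge0$, $l\ge1$, $\mu\in\mathbb K^*$ with $a_n=\mu^{(-1)^n}a_{n+l}$ for all $n\ge m$. *)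

From HB Require Import structures.
From mathcomp Require Import all_boot all_order all_algebra.
Set Implicit Arguments. Unset Strict Implicit. Unset Printing Implicit Defensive.
Import Order.TTheory GRing.Theory Num.Theory.
Local Open Scope ring_scope.

(* Laurent series in X^{-1} over K:  a series is a pair (k, g) denoting
   sum_{i >= 0} g i * X^(k - i). *)
Record LS (K : fieldType) := MkLS { ls_top : int; ls_g : nat -> K }.

Section Laurent.
Variable K : fieldType.

Definition ls_coef (s : LS K) (m : int) : K :=
  if m <= ls_top s then ls_g s `|ls_top s - m|%N else 0.

Definition ls_eq (s t : LS K) : Prop := forall m : int, ls_coef s m = ls_coef t m.

Definition ls_add (s t : LS K) : LS K :=
  let M := Num.max (ls_top s) (ls_top t) in
  MkLS M (fun i => ls_coef s (M - i%:Z) + ls_coef t (M - i%:Z)).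

Definition ls_opp (s : LS K) : LS K := MkLS (ls_top s) (fun i => - ls_g s i).

Definition ls_sub (s t : LS K) : LS K := ls_add s (ls_opp t).

Definition ls_mul (s t : LS K) : LS K :=
  MkLS (ls_top s + ls_top t)
       (fun n => \sum_(i < n.+1) ls_g s i * ls_g t (n - i)).

Definition ls_poly (p : {poly K}) : LS K :=
  MkLS (size p)%:Z (fun i => if (i <= size p)%N then p`_(size p - i) else 0).

Definition ls_one : LS K := ls_poly 1.

(* ord s > 0  (with ord 0 = +oo): no monomial X^m with m >= 0 *)
Definition ord_pos (s : LS K) : Prop := forall m : int, 0 <= m -> ls_coef s m = 0.
(* ord s < 0 : some monomial X^m with m > 0 has a nonzero coefficient *)
Definition ord_neg (s : LS K) : Prop := exists m : int, 0 < m /\ ls_coef s m != 0.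

Definition ls_is_poly (s : LS K) : Prop := exists p : {poly K}, ls_eq s (ls_poly p).

(* alpha lies in K(X, sqrtD) and beta = sigma(alpha): alpha = (p + q sqrtD)/r,
   beta = (p - q sqrtD)/r *)
Definition sigma_conj (sqrtD alpha beta : LS K) : Prop :=
  exists p q r : {poly K}, r != 0 /\
    ls_eq (ls_mul (ls_poly r) alpha) (ls_add (ls_poly p) (ls_mul (ls_poly q) sqrtD)) /\
    ls_eq (ls_mul (ls_poly r) beta) (ls_sub (ls_poly p) (ls_mul (ls_poly q) sqrtD)).

Definition is_floor (beta : LS K) (p : {poly K}) : Prop :=
  ord_pos (ls_sub beta (ls_poly p)).

(* A = (alpha_n), a = (a_n) is the continued fraction expansion of alpha:
   alpha_0 = alpha, a_n = floor alpha_n, alpha_{n+1} = 1/(alpha_n - a_n) *)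
Definition cf_expansion (alpha : LS K) (A : nat -> LS K) (a : nat -> {poly K}) : Prop :=
  ls_eq (A 0%N) alpha /\
  (forall n, is_floor (A n) (a n)) /\
  (forall n, ls_eq (ls_mul (ls_sub (A n) (ls_poly (a n))) (A n.+1)) ls_one).

(* quasi-periodicity: a_n = mu^((-1)^n) a_{n+l} for n >= m *)
Definition quasi_periodic (a : nat -> {poly K}) : Prop :=
  exists (m l : nat) (mu : K), (0 < l)%N /\ mu != 0 /\
    forall n, (m <= n)%N ->
      a n = (if odd n then mu^-1 else mu) *: a (n + l)%N.

Definition pure_periodic (a : nat -> {poly K}) : Prop :=
  exists l : nat, (0 < l)%N /\ forall n, a n = a (n + l)%N.

End Laurent.

(* Let [y n] be the expansion of [sigma(alpha)] driven by the partial quotients [a n] of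
   [alpha]: [y 0 = sigma(alpha)], [y (n+1) = 1 / (y n - a n)].  As [alpha] is sigma-reduced,
   every [a n] is non-constant, so [ord (y n) > 0] for all [n], and [y n = sigma(alpha_n)].
   Quasi-periodicity from [m] on gives [alpha_m = c alpha_(m+l)] with [c] constant, hence
   [y m = c y (m+l)] by conjugation.  Since [ord (y n) > 0], the relation
   [y n = a n + 1 / y (n+1)] recovers [a n] and [y n] from [y (n+1)], so quasi-periodicity
   propagates back to [n = 0].  For odd [l] this already makes [2 l] a period; for even [l],
   Galois' reversal together with [alpha + sigma(alpha) = a 0] forces [mu^2 = 1]. *)

From HB Require Import structures.
From mathcomp Require Import all_boot all_order all_algebra zify.
From Stdlib Require Import Setoid Ring.
Import GRing.Theory Num.Theory Order.TTheory.
Local Open Scope ring_scope.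
Set Implicit Arguments. Unset Strict Implicit.

Declare Scope ls_scope.
Delimit Scope ls_scope with LS.

Definition ls_zero {K : fieldType} : LS K := MkLS 0 (fun _ => 0).

Notation "0" := ls_zero : ls_scope.
Notation "1" := (ls_one _) : ls_scope.
Notation "s + t" := (ls_add s t) : ls_scope.
Notation "- s" := (ls_opp s) : ls_scope.
Notation "s - t" := (ls_sub s t) : ls_scope.
Notation "s * t" := (ls_mul s t) : ls_scope.
Notation "s ≡ t" := (ls_eq s%LS t%LS) (at level 70, no associativity).

Section LaurentCoefficients.
Variable K : fieldType.
Local Notation LS := (LS K).
Local Notation coef s m := (@ls_coef K s%LS m).

Lemma ls_coef_gt_top (s : LS) m : ls_top s < m -> coef s m = 0.
Proof. by rewrite /ls_coef leNgt => ->. Qed.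

Lemma ls_coef_top_sub (s : LS) (i : nat) : coef s (ls_top s - i%:Z) = ls_g s i.
Proof. by rewrite /ls_coef ifT; [congr ls_g|]; lia. Qed.

Lemma ls_coef0 m : coef 0 m = 0.
Proof. by rewrite /ls_coef; case: ifP. Qed.

Lemma ls_coefD (s t : LS) m : coef (s + t) m = coef s m + coef t m.
Proof.
rewrite /ls_add /ls_coef /=; case: ifP => h.
  have -> : Num.max (ls_top s) (ls_top t) - `|Num.max (ls_top s) (ls_top t) - m|%N%:Z = m
    by lia.
  by rewrite /ls_coef.
have e1 : (m <= ls_top s) = false by lia.
have e2 : (m <= ls_top t) = false by lia.
by rewrite e1 e2 addr0.
Qed.

Lemma ls_coefN (s : LS) m : coef (- s) m = - coef s m.
Proof. by rewrite /ls_coef /=; case: ifP; rewrite ?oppr0. Qed.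

Lemma ls_coef_poly (p : {poly K}) m : coef (ls_poly p) m = if 0 <= m then p`_`|m|%N else 0.
Proof.
rewrite /ls_coef /=; case: ifP => h1; case: ifP => h2 //.
- by rewrite ifT; [congr (p`_ _)|]; lia.
- by rewrite ifF //; lia.
- by rewrite nth_default //; lia.
Qed.

Lemma ls_coef1 m : coef 1 m = (m == 0)%:R.
Proof.
rewrite /ls_one ls_coef_poly coefC.
have [->|hm] := eqVneq m 0; first by [].
by case: ifP => // h; rewrite ifF //; lia.
Qed.

(* Coefficients of a product are finite sums over a window ]B - N, B] of exponents. *)
Definition window_sum (F : int -> K) (B : int) (N : nat) := \sum_(i < N) F (B - i%:Z).

Definition window_supp (F : int -> K) (B : int) (N : nat) :=
  forall x : int, ~~ ((B - N%:Z < x) && (x <= B)) -> F x = 0.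

Lemma window_sum_widen F B1 N1 B2 N2 : window_supp F B1 N1 ->
  B1 <= B2 -> B2 - N2%:Z <= B1 - N1%:Z -> window_sum F B1 N1 = window_sum F B2 N2.
Proof.
move=> supp hB hN.
set k := absz (B2 - B1)%R; set r := absz ((B1 - N1%:Z) - (B2 - N2%:Z))%R.
have -> : N2 = (k + (N1 + r))%N by lia.
rewrite /window_sum big_split_ord big_split_ord /=.
rewrite [X in _ = X + _]big1 ?add0r => [|i _]; last by apply: supp; have := ltn_ord i; lia.
rewrite [X in _ = _ + X]big1 ?addr0 => [|i _]; last by apply: supp; have := ltn_ord i; lia.
by apply: eq_bigr => i _; congr F; lia.
Qed.

Lemma window_sum_eq F B1 N1 B2 N2 : window_supp F B1 N1 -> window_supp F B2 N2 ->
  window_sum F B1 N1 = window_sum F B2 N2.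
Proof.
move=> supp1 supp2; set B := Num.max B1 B2.
set N := absz (B - Num.min (B1 - N1%:Z) (B2 - N2%:Z))%R.
by rewrite (@window_sum_widen F B1 N1 B N) ?(@window_sum_widen F B2 N2 B N) //; lia.
Qed.

Lemma window_sum_rev F B N m :
  window_sum F B N = window_sum (fun x => F (m - x)) (m - B + N%:Z - 1) N.
Proof.
rewrite /window_sum (reindex_inj rev_ord_inj) /=.
by apply: eq_bigr => i _; congr F; have := ltn_ord i; lia.
Qed.

Definition conv_term (s t : LS) (m : int) (x : int) := coef s x * coef t (m - x).

Lemma ls_coefM_top (s t : LS) m :
  coef (s * t) m = window_sum (conv_term s t m) (ls_top s) (absz (ls_top s + ls_top t - m)%R).+1.
Proof.
rewrite {1}/ls_coef /window_sum /conv_term /=; case: ifP => h.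
  apply eq_bigr => i _; rewrite -(ls_coef_top_sub s i); congr (_ * _).
  have hi := ltn_ord i; rewrite /ls_coef ifT; last by lia.
  by congr ls_g; move: (ls_top s) (ls_top t) (nat_of_ord i) h hi => a b j; lia.
by rewrite big1 // => i _; rewrite (@ls_coef_gt_top t) ?mulr0 //; have := ltn_ord i; lia.
Qed.

Lemma window_supp_conv (s t : LS) m B N :
  ls_top s <= B -> B - N%:Z < m - ls_top t -> window_supp (conv_term s t m) B N.
Proof.
move=> hB hN x hx; rewrite /conv_term.
have [hxB|hxB] := boolP (x <= B).
  by rewrite (@ls_coef_gt_top t) ?mulr0 //; lia.
by rewrite ls_coef_gt_top ?mul0r //; lia.
Qed.

Lemma ls_coefM (s t : LS) m B N : window_supp (conv_term s t m) B N ->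
  coef (s * t) m = window_sum (conv_term s t m) B N.
Proof.
by move=> supp; rewrite ls_coefM_top; apply: window_sum_eq => //; apply: window_supp_conv; lia.
Qed.

Lemma ls_eq_refl (s : LS) : s ≡ s.
Proof. by []. Qed.

Lemma ls_eq_sym (s t : LS) : s ≡ t -> t ≡ s.
Proof. by move=> h m. Qed.

Lemma ls_eq_trans (s t u : LS) : s ≡ t -> t ≡ u -> s ≡ u.
Proof. by move=> h1 h2 m; rewrite h1 h2. Qed.

(* [vanish_from s a]: the coefficients of [X^m], [m >= a], vanish, i.e. [ord s > - a]. *)
Definition vanish_from (s : LS) (a : int) := forall m : int, a <= m -> coef s m = 0.
End LaurentCoefficients.

Arguments vanish_from {K} s%_LS a.

Add Parametric Relation (K : fieldType) : (LS K) (@ls_eq K)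
  reflexivity proved by (@ls_eq_refl K)
  symmetry proved by (@ls_eq_sym K)
  transitivity proved by (@ls_eq_trans K) as ls_eq_rel.

Add Parametric Morphism (K : fieldType) : (@ls_add K) with signature
  (@ls_eq K) ==> (@ls_eq K) ==> (@ls_eq K) as ls_add_mor.
Proof. by move=> s s' h t t' h' m; rewrite !ls_coefD h h'. Qed.

Add Parametric Morphism (K : fieldType) : (@ls_opp K) with signature
  (@ls_eq K) ==> (@ls_eq K) as ls_opp_mor.
Proof. by move=> s s' h m; rewrite !ls_coefN h. Qed.

Add Parametric Morphism (K : fieldType) : (@ls_sub K) with signature
  (@ls_eq K) ==> (@ls_eq K) ==> (@ls_eq K) as ls_sub_mor.
Proof. by move=> s s' h t t' h'; rewrite /ls_sub h h'. Qed.

Add Parametric Morphism (K : fieldType) : (@ls_mul K) with signature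
  (@ls_eq K) ==> (@ls_eq K) ==> (@ls_eq K) as ls_mul_mor.
Proof.
move=> s s' h t t' h' m; have e x : conv_term s t m x = conv_term s' t' m x.
  by rewrite /conv_term h h'.
rewrite ls_coefM_top (@ls_coefM K s' t' m (ls_top s) (absz (ls_top s + ls_top t - m)%R).+1).
  by apply: eq_bigr => i _; rewrite e.
by move=> x hx; rewrite -e; apply: window_supp_conv hx; lia.
Qed.

Add Parametric Morphism (K : fieldType) : (@vanish_from K) with signature
  (@ls_eq K) ==> eq ==> iff as vanish_from_mor.
Proof. by move=> s s' h a; split=> H m hm; [rewrite -h | rewrite h]; apply: H. Qed.

Section LaurentSeries.
Variable K : fieldType.
Local Notation LS := (LS K).
Local Notation coef s m := (@ls_coef K s%LS m).

Lemma ls_add0r (s : LS) : 0 + s ≡ s.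
Proof. by move=> m; rewrite ls_coefD ls_coef0 add0r. Qed.

Lemma ls_addC (s t : LS) : s + t ≡ t + s.
Proof. by move=> m; rewrite !ls_coefD addrC. Qed.

Lemma ls_addA (s t u : LS) : s + (t + u) ≡ s + t + u.
Proof. by move=> m; rewrite !ls_coefD addrA. Qed.

Lemma ls_addNr (s : LS) : s + - s ≡ 0.
Proof. by move=> m; rewrite ls_coefD ls_coefN ls_coef0 subrr. Qed.

Lemma ls_mul1r (s : LS) : 1 * s ≡ s.
Proof.
move=> m; rewrite (@ls_coefM _ _ _ m 0 1).
  by rewrite /window_sum big_ord1 /conv_term ls_coef1 subr0 eqxx mul1r subr0.
by move=> x hx; rewrite /conv_term ls_coef1 (_ : (x == 0) = false) ?mul0r //; lia.
Qed.

Lemma ls_mulC (s t : LS) : s * t ≡ t * s.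
Proof.
move=> m; rewrite ls_coefM_top (window_sum_rev _ _ _ m); set B := (m - _ + _ - 1).
rewrite (@ls_coefM _ t s m B (absz (ls_top s + ls_top t - m)%R).+1).
  by apply: eq_bigr => i _; rewrite /conv_term mulrC; congr (coef _ _ * _); lia.
move=> x hx; rewrite /conv_term; have [hxt|hxt] := boolP (x <= ls_top t).
  by rewrite (@ls_coef_gt_top _ s) ?mulr0 //; rewrite /B in hx; lia.
by rewrite ls_coef_gt_top ?mul0r //; lia.
Qed.

Lemma ls_mulDl (s t u : LS) : (s + t) * u ≡ s * u + t * u.
Proof.
move=> m; rewrite ls_coefD; set B := Num.max (ls_top s) (ls_top t).
set N := (absz (B + ls_top u - m)%R).+1.
rewrite (@ls_coefM _ _ _ m B N); last by apply: window_supp_conv => /=; lia.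
rewrite (@ls_coefM _ s u m B N); last by apply: window_supp_conv => /=; lia.
rewrite (@ls_coefM _ t u m B N); last by apply: window_supp_conv => /=; lia.
by rewrite -big_split; apply: eq_bigr => i _; rewrite /conv_term ls_coefD mulrDl.
Qed.

Lemma ls_mulA (s t u : LS) : s * (t * u) ≡ s * t * u.
Proof.
move=> m; set N := (absz (ls_top s + ls_top t + ls_top u - m)%R).+1.
rewrite (@ls_coefM _ (s * t)%LS u m (ls_top s + ls_top t) N); last first.
  by apply: window_supp_conv => /=; lia.
rewrite (@ls_coefM _ s (t * u)%LS m (ls_top s) N); last by apply: window_supp_conv => /=; lia.
rewrite /window_sum /conv_term.
transitivity (\sum_(j < N) \sum_(i < N) coef s (ls_top s - j%:Z) *
    coef t (ls_top t + j%:Z - i%:Z) * coef u (m - ls_top s - ls_top t + i%:Z)).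
  apply: eq_bigr => j _.
  rewrite (@ls_coefM _ t u _ (ls_top t + j%:Z) N); last by apply: window_supp_conv => /=; lia.
  rewrite /window_sum /conv_term mulr_sumr; apply: eq_bigr => i _.
  by rewrite mulrA; congr (coef _ _ * coef _ _ * coef _ _); lia.
rewrite exchange_big; apply: eq_bigr => i _.
rewrite (@ls_coefM _ s t _ (ls_top s) N); last first.
  by apply: window_supp_conv => /=; have := ltn_ord i; lia.
rewrite /window_sum /conv_term mulr_suml; apply: eq_bigr => j _.
by congr (coef _ _ * coef _ _ * coef _ _); lia.
Qed.

Definition ls_ring_theory :
  ring_theory ls_zero (ls_one K) (@ls_add K) (@ls_mul K) (@ls_sub K) (@ls_opp K) (@ls_eq K).
Proof.
split; [exact: ls_add0r | exact: ls_addC | exact: ls_addA | exact: ls_mul1r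
       | exact: ls_mulC | exact: ls_mulA | exact: ls_mulDl | by [] | exact: ls_addNr].
Qed.

Add Ring ls_ring : ls_ring_theory.

Lemma vanish_from_le (s : LS) (a b : int) : vanish_from s a -> a <= b -> vanish_from s b.
Proof. by move=> H hab m hm; apply: H; lia. Qed.

Lemma vanish_from_top (s : LS) : vanish_from s (ls_top s + 1).
Proof. by move=> m hm; rewrite ls_coef_gt_top //; lia. Qed.

Lemma vanish_fromD (s t : LS) a : vanish_from s a -> vanish_from t a -> vanish_from (s + t) a.
Proof. by move=> hs ht m hm; rewrite ls_coefD hs ?ht ?addr0. Qed.

Lemma vanish_fromN (s : LS) a : vanish_from s a -> vanish_from (- s) a.
Proof. by move=> hs m hm; rewrite ls_coefN hs ?oppr0. Qed.

Lemma vanish_fromB (s t : LS) a : vanish_from s a -> vanish_from t a -> vanish_from (s - t) a.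
Proof. by move=> hs ht; apply: vanish_fromD => //; apply: vanish_fromN. Qed.

Lemma vanish_fromM (s t : LS) a b :
  vanish_from s a -> vanish_from t b -> vanish_from (s * t) (a + b - 1).
Proof.
move=> hs ht m hm; rewrite ls_coefM_top /window_sum big1 // => i _; rewrite /conv_term.
have [h|h] := boolP (a <= ls_top s - i%:Z); first by rewrite hs ?mul0r.
by rewrite ht ?mulr0 //; lia.
Qed.

Lemma ls_polyD (p q : {poly K}) : ls_poly (p + q)%R ≡ ls_poly p + ls_poly q.
Proof. by move=> m; rewrite ls_coefD !ls_coef_poly coefD; case: ifP; rewrite ?addr0. Qed.

Lemma ls_polyN (p : {poly K}) : ls_poly (- p)%R ≡ - ls_poly p.
Proof. by move=> m; rewrite ls_coefN !ls_coef_poly coefN; case: ifP; rewrite ?oppr0. Qed.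

Lemma ls_polyB (p q : {poly K}) : ls_poly (p - q)%R ≡ ls_poly p - ls_poly q.
Proof. by rewrite /ls_sub -ls_polyN -ls_polyD. Qed.

Lemma ls_poly0 : ls_poly (0 : {poly K}) ≡ 0.
Proof. by move=> m; rewrite ls_coef_poly ls_coef0 coef0; case: ifP. Qed.

Lemma ls_polyM (p q : {poly K}) : ls_poly (p * q)%R ≡ ls_poly p * ls_poly q.
Proof.
case=> [k|k].
  rewrite (@ls_coefM _ _ _ k k k.+1).
    rewrite ls_coef_poly /= coefMr /window_sum; apply: eq_bigr => i _.
    have hi := ltn_ord i; rewrite /conv_term !ls_coef_poly ifT; last by lia.
    by rewrite ifT; [congr (_`_ _ * _`_ _)|]; lia.
  move=> x hx; rewrite /conv_term !ls_coef_poly; case: ifP => h1; last by rewrite mul0r.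
  by rewrite ifF ?mulr0 //; lia.
rewrite ls_coef_poly /= (@ls_coefM _ _ _ _ 0 0) ?/window_sum ?big_ord0 // => x hx.
rewrite /conv_term !ls_coef_poly; case: ifP => h1; last by rewrite mul0r.
by rewrite ifF ?mulr0 //; lia.
Qed.

Lemma vanish_from_poly (p : {poly K}) : vanish_from (ls_poly p) (size p)%:Z.
Proof.
move=> m hm; rewrite ls_coef_poly; case: ifP => // h.
by rewrite nth_default //; move: hm h; move: (size p) => k; lia.
Qed.

Lemma ls_poly_eq0 (p : {poly K}) : vanish_from (ls_poly p) 0 -> p = 0%R.
Proof. by move=> hp; apply/polyP => i; have := hp i%:Z isT; rewrite ls_coef_poly coef0. Qed.

Lemma ls_poly_inj (p q : {poly K}) : ls_poly p ≡ ls_poly q -> p = q.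
Proof.
move=> e; apply/eqP; rewrite -subr_eq0; apply/eqP; apply: ls_poly_eq0.
by rewrite ls_polyB e => m _; rewrite ls_coefD ls_coefN subrr.
Qed.

Lemma is_floor_coef (s : LS) (p : {poly K}) m :
  is_floor s p -> 0 <= m -> coef s m = p`_`|m|%N.
Proof.
move=> hp hm; have := hp m hm; rewrite ls_coefD ls_coefN ls_coef_poly hm.
by move/eqP; rewrite subr_eq0 => /eqP.
Qed.

Lemma is_floor_unique (s t : LS) (p q : {poly K}) :
  is_floor s p -> is_floor t q -> s ≡ t -> p = q.
Proof.
by move=> hp hq e; apply/polyP => i; rewrite -(@is_floor_coef s p i) // e (is_floor_coef hq).
Qed.

Definition ls_cst (c : K) : LS := ls_poly c%:P.

Lemma vanish_from_cst c : vanish_from (ls_cst c) 1.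
Proof.
have hsize : (size c%:P)%:Z <= 1 by have := size_polyC_leq1 c; lia.
exact: vanish_from_le (@vanish_from_poly c%:P) hsize.
Qed.

Lemma ls_polyZ c (p : {poly K}) : ls_poly (c *: p)%R ≡ ls_cst c * ls_poly p.
Proof. by rewrite -mul_polyC ls_polyM. Qed.

Lemma ls_cstM c c' : ls_cst c * ls_cst c' ≡ ls_cst (c * c').
Proof. by rewrite /ls_cst polyCM ls_polyM. Qed.

Lemma ls_cst_inv c c' : c * c' = 1%R -> ls_cst c * ls_cst c' ≡ 1.
Proof. by move=> h; rewrite ls_cstM h. Qed.

(* Inverse of a series whose leading monomial is [coef s d * X^d], by the usual
   recursion on the coefficients; [inv_coef s d n k] is its [k]-th coefficient, [k <= n]. *)
Fixpoint inv_coef (s : LS) (d : int) (n : nat) : nat -> K :=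
  let c i := coef s (d - i%:Z) in
  match n with
  | 0 => fun _ => (c 0%N)^-1
  | n'.+1 => fun k => if (k <= n')%N then inv_coef s d n' k
             else - (c 0%N)^-1 * \sum_(i < n'.+1) c i.+1 * inv_coef s d n' (n' - i)
  end.

Definition ls_inv (s : LS) (d : int) : LS := MkLS (- d) (fun n => inv_coef s d n n).

Lemma inv_coef_stable s d n k : (k <= n)%N -> inv_coef s d n k = inv_coef s d k k.
Proof.
elim: n => [|n IH] hk; first by move: hk; rewrite leqn0 => /eqP ->.
rewrite /=; case: ifP => h; first exact: IH.
have -> : k = n.+1 by lia.
by rewrite /= ltnn.
Qed.

Lemma inv_coefS s d n : inv_coef s d n.+1 n.+1 =
  - (coef s d)^-1 * \sum_(i < n.+1) coef s (d - i.+1%:Z) * inv_coef s d (n - i) (n - i).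
Proof.
rewrite /= ltnn subr0; congr (_ * _); apply: eq_bigr => i _.
by rewrite inv_coef_stable // leq_subr.
Qed.

Lemma ls_mul_inv (s : LS) (d : int) : coef s d != 0 -> vanish_from s (d + 1) ->
  s * ls_inv s d ≡ 1.
Proof.
move=> hc hv m; have [hm|hm] := boolP (0 < m).
  rewrite ls_coef1 (_ : (m == 0) = false); last by lia.
  apply: (@vanish_fromM s (ls_inv s d) (d + 1) (- d + 1)) => //; last by lia.
  exact: vanish_from_top.
set n := `|m|%N; have hmn : m = - n%:Z by rewrite /n; lia.
rewrite (@ls_coefM _ _ _ m d n.+1); last first.
  move=> x hx; rewrite /conv_term; have [hxd|hxd] := boolP (x <= d).
    by rewrite (@ls_coef_gt_top _ (ls_inv s d)) ?mulr0 //=; lia.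
  by rewrite hv ?mul0r //; lia.
have -> : window_sum (conv_term s (ls_inv s d) m) d n.+1 =
    \sum_(i < n.+1) coef s (d - i%:Z) * inv_coef s d (n - i) (n - i).
  apply: eq_bigr => i _; rewrite /conv_term; congr (_ * _).
  have hi := ltn_ord i; rewrite -[RHS](ls_coef_top_sub (ls_inv s d)) /=.
  by congr (ls_coef _ _); lia.
rewrite ls_coef1; case: n hmn => [|n] hmn.
  by rewrite big_ord1 /= subr0 mulfV // hmn.
rewrite big_ord_recl inv_coefS (_ : (m == 0) = false); last by lia.
by rewrite subr0 mulrA mulrN mulfV // mulN1r addNr.
Qed.

Lemma ls_eq0_of_poly_mul (r : {poly K}) (s : LS) : r != 0%R -> ls_poly r * s ≡ 0 -> s ≡ 0.
Proof.
move=> hr e; set d := ((size r).-1)%:Z.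
have hs : (0 < size r)%N by rewrite size_poly_gt0.
have hinv : ls_poly r * ls_inv (ls_poly r) d ≡ 1.
  apply: ls_mul_inv; first by rewrite ls_coef_poly /d /= -lead_coefE lead_coef_eq0.
  have hsize : (size r)%:Z <= d + 1 by rewrite /d; move: hs; move: (size r) => k; lia.
  exact: vanish_from_le (@vanish_from_poly r) hsize.
transitivity (ls_poly r * ls_inv (ls_poly r) d * s)%LS; first by rewrite hinv; ring.
transitivity (ls_inv (ls_poly r) d * (ls_poly r * s))%LS; first by ring.
by rewrite e; ring.
Qed.

Ltac push_ls_poly := repeat first
  [rewrite ls_polyB | rewrite ls_polyM | rewrite ls_polyD | rewrite ls_polyN | rewrite ls_polyZ].

Lemma square_of_sqr_ratio (D X Y : {poly K}) : Y != 0%R -> (Y * Y * D = X * X)%R ->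
  exists p, D = (p * p)%R.
Proof.
move=> hY e; set g := gcdp X Y.
have hg : g != 0%R by rewrite /g gcdp_eq0 negb_and hY orbT.
set X' := X %/ g; set Y' := Y %/ g.
have eX : X = (X' * g)%R by rewrite /X' divpK // dvdp_gcdl.
have eY : Y = (Y' * g)%R by rewrite /Y' divpK // dvdp_gcdr.
have cop : coprimep X' Y' by apply: coprimep_div_gcd; rewrite hY orbT.
have e' : (Y' * Y' * D = X' * X')%R.
  apply: (@mulIf _ (g * g)); first by rewrite mulf_neq0.
  have : (Y' * g * (Y' * g) * D = X' * g * (X' * g))%R by rewrite -eX -eY.
  by move=> h; rewrite mulrAC mulrACA [RHS]mulrACA.
have dvY'X'2 : Y' %| X' * X' by rewrite -e' -mulrA dvdp_mulIl.
have dvY'X' : Y' %| X' by rewrite -(@Gauss_dvdpl _ X' X' Y') // coprimep_sym.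
have : coprimep Y' Y' by apply: (coprimep_dvdl dvY'X'); rewrite coprimep_sym.
rewrite coprimepp => /size_poly1P [k hk eY'].
exists (k^-1 *: X'); rewrite -scalerAl -scalerAr scalerA -e' eY' -!mul_polyC !mulrA.
by rewrite -!polyCM divfK // mulVf // polyC1 mul1r.
Qed.

Section SqrtD.
Variables (D : {poly K}) (sqrtD : LS).
Hypothesis D_nonsquare : ~ (exists p : {poly K}, D = (p * p)%R).
Hypothesis sqrtD_sqr : sqrtD * sqrtD ≡ ls_poly D.

Lemma sqrtD_indep (P Q : {poly K}) : ls_poly P + ls_poly Q * sqrtD ≡ 0 -> P = 0%R /\ Q = 0%R.
Proof.
move=> e.
have eP : ls_poly P ≡ - (ls_poly Q * sqrtD).
  transitivity (ls_poly P + ls_poly Q * sqrtD - ls_poly Q * sqrtD)%LS; first by ring.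
  by rewrite e; ring.
have hQ : Q = 0%R.
  apply/eqP/negPn/negP => hQ; apply: D_nonsquare; apply: (@square_of_sqr_ratio D P Q hQ).
  by apply: ls_poly_inj; push_ls_poly; rewrite eP -sqrtD_sqr; ring.
split=> //; apply: ls_poly_inj; rewrite ls_poly0 -e hQ ls_poly0; ring.
Qed.

Lemma sigma_conj_eql (x x' y : LS) : sigma_conj sqrtD x y -> x ≡ x' -> sigma_conj sqrtD x' y.
Proof. by move=> [P [Q [R [hR [ex ey]]]]] e; exists P, Q, R; rewrite -e. Qed.

Lemma sigma_conjZ (c : K) (x y : LS) :
  sigma_conj sqrtD x y -> sigma_conj sqrtD (ls_cst c * x)%LS (ls_cst c * y)%LS.
Proof.
move=> [P [Q [R [hR [ex ey]]]]]; exists (c *: P)%R, (c *: Q)%R, R; split=> //.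
split; push_ls_poly.
  by transitivity (ls_cst c * (ls_poly R * x))%LS; [ring | rewrite ex; ring].
by transitivity (ls_cst c * (ls_poly R * y))%LS; [ring | rewrite ey; ring].
Qed.

Lemma sigma_conj_unique (x y y' : LS) :
  sigma_conj sqrtD x y -> sigma_conj sqrtD x y' -> y ≡ y'.
Proof.
move=> [P1 [Q1 [R1 [hR1 [ex1 ey1]]]]] [P2 [Q2 [R2 [hR2 [ex2 ey2]]]]].
have [hP hQ] : (R2 * P1 - R1 * P2 = 0 /\ R2 * Q1 - R1 * Q2 = 0)%R.
  apply: sqrtD_indep; push_ls_poly.
  transitivity (ls_poly R2 * (ls_poly P1 + ls_poly Q1 * sqrtD) -
                ls_poly R1 * (ls_poly P2 + ls_poly Q2 * sqrtD))%LS; first by ring.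
  by rewrite -ex1 -ex2; ring.
suff e : y - y' ≡ 0.
  by transitivity (y - y' + y')%LS; [ring | rewrite e; ring].
apply: (@ls_eq0_of_poly_mul (R1 * R2)%R); first by rewrite mulf_neq0.
transitivity (ls_poly R2 * (ls_poly R1 * y) - ls_poly R1 * (ls_poly R2 * y'))%LS.
  by rewrite ls_polyM; ring.
rewrite ey1 ey2; transitivity (ls_poly (R2 * P1 - R1 * P2)%R -
    ls_poly (R2 * Q1 - R1 * Q2)%R * sqrtD)%LS; first by push_ls_poly; ring.
by rewrite hP hQ ls_poly0; ring.
Qed.

Lemma sigma_conj_step (x x' y y' : LS) (p : {poly K}) : sigma_conj sqrtD x y ->
  (x - ls_poly p) * x' ≡ 1 -> (y - ls_poly p) * y' ≡ 1 -> sigma_conj sqrtD x' y'.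
Proof.
move=> [P [Q [R [hR [ex ey]]]]] hx hy.
set U := (ls_poly (P - R * p)%R + ls_poly Q * sqrtD)%LS.
set V := (ls_poly (P - R * p)%R - ls_poly Q * sqrtD)%LS.
have hU : U * x' ≡ ls_poly R.
  transitivity (ls_poly R * ((x - ls_poly p) * x'))%LS; last by rewrite hx; ring.
  transitivity ((ls_poly R * x - ls_poly R * ls_poly p) * x')%LS; last by ring.
  by rewrite ex /U; push_ls_poly; ring.
have hV : V * y' ≡ ls_poly R.
  transitivity (ls_poly R * ((y - ls_poly p) * y'))%LS; last by rewrite hy; ring.
  transitivity ((ls_poly R * y - ls_poly R * ls_poly p) * y')%LS; last by ring.
  by rewrite ey /V; push_ls_poly; ring.
set N := ((P - R * p) * (P - R * p) - Q * Q * D)%R.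
have hN : ls_poly N ≡ U * V by rewrite /N /U /V; push_ls_poly; rewrite -sqrtD_sqr; ring.
exists (R * (P - R * p))%R, (- (R * Q))%R, N; split; [|split].
- apply/negP => /eqP hN0; suff : (R * R)%R = 0%R by move/eqP; rewrite mulf_eq0 orbb (negbTE hR).
  apply: ls_poly_inj; rewrite ls_polyM ls_poly0.
  transitivity (U * x' * (V * y'))%LS; first by rewrite hU hV.
  transitivity (U * V * (x' * y'))%LS; first by ring.
  by rewrite -hN hN0 ls_poly0; ring.
- transitivity (V * (U * x'))%LS; first by rewrite hN; ring.
  by rewrite hU /V; push_ls_poly; ring.
- transitivity (U * (V * y'))%LS; first by rewrite hN; ring.
  by rewrite hV /U; push_ls_poly; ring.
Qed.

End SqrtD.

Definition cf_recurrence (x : nat -> LS) (b : nat -> {poly K}) :=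
  forall n, (x n - ls_poly (b n)) * x n.+1 ≡ 1.

Lemma sigma_conj_seq (D : {poly K}) (sqrtD : LS) (x y : nat -> LS) (b : nat -> {poly K}) :
  sqrtD * sqrtD ≡ ls_poly D -> sigma_conj sqrtD (x 0%N) (y 0%N) ->
  cf_recurrence x b -> cf_recurrence y b -> forall n, sigma_conj sqrtD (x n) (y n).
Proof.
by move=> hs h0 hx hy; elim=> [|n IH]; last exact (sigma_conj_step hs IH (hx n) (hy n)).
Qed.

(* The difference of the [n]-th complete quotients gains two orders of vanishing
   at each step back. *)
Lemma cf_head_unique (x y : nat -> LS) (b : nat -> {poly K}) :
  (forall n, is_floor (x n) (b n)) -> (forall n, is_floor (y n) (b n)) ->
  cf_recurrence x b -> cf_recurrence y b -> x 0%N ≡ y 0%N.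
Proof.
move=> hx hy ex ey.
have gain (k : nat) n : vanish_from (x n - y n) (1 - 2 * k%:Z).
  elim: k n => [|k IH] n.
    have -> : x n - y n ≡ (x n - ls_poly (b n)) - (y n - ls_poly (b n)) by ring.
    by apply: vanish_from_le (vanish_fromB (hx n) (hy n)) _; lia.
  have -> : x n - y n ≡ (x n - ls_poly (b n)) * (y n - ls_poly (b n)) * - (x n.+1 - y n.+1).
    transitivity ((x n - ls_poly (b n)) * 1 - (y n - ls_poly (b n)) * 1)%LS; first by ring.
    by rewrite -{1}(ey n) -(ex n); ring.
  apply: vanish_from_le (vanish_fromM (vanish_fromM (hx n) (hy n)) (vanish_fromN (IH n.+1))) _.
  lia.
move=> m; have := gain `|(1 - m)%R|%N 0%N m; rewrite ls_coefD ls_coefN => h.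
by apply/eqP; rewrite -subr_eq0 h //; lia.
Qed.

Lemma floor_size_gt1 (s : LS) (p : {poly K}) : is_floor s p -> ~ vanish_from s 1 ->
  (1 < size p)%N.
Proof.
move=> hp hs; apply/contraT; rewrite -leqNgt => hsize; case: hs.
have -> : s ≡ (s - ls_poly p) + ls_poly p by ring.
apply: vanish_fromD; first exact: vanish_from_le hp _.
by apply: vanish_from_le (@vanish_from_poly p) _; lia.
Qed.

Lemma ord_neg_not_vanish (s : LS) : ord_neg s -> ~ vanish_from s 1.
Proof. by move=> [m [hm hs]] hv; move: hs; rewrite hv ?eqxx //; lia. Qed.

Lemma inv_ord_pos_not_vanish (s t : LS) : ord_pos s -> s * t ≡ 1 -> ~ vanish_from t 1.
Proof.
move=> hs e ht; have := vanish_fromM hs ht; rewrite e => /(_ 0 isT).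
by rewrite ls_coef1 eqxx => /eqP; rewrite oner_eq0.
Qed.

Lemma cf_partial_quotient_nonconst (x : nat -> LS) (b : nat -> {poly K}) :
  ~ vanish_from (x 0%N) 1 -> (forall n, is_floor (x n) (b n)) -> cf_recurrence x b ->
  forall n, (1 < size (b n))%N.
Proof.
move=> hx0 hx ex [|n]; apply: floor_size_gt1 (hx _) _; first exact: hx0.
exact: inv_ord_pos_not_vanish (hx n) (ex n).
Qed.

Lemma inv_sub_nonconst (y : LS) (p : {poly K}) : ord_pos y -> (1 < size p)%N ->
  let y' := ls_inv (y - ls_poly p)%LS (size p).-1 in (y - ls_poly p) * y' ≡ 1 /\ ord_pos y'.
Proof.
move=> hy hp y'; set d := ((size p).-1)%:Z.
have hd : 0 < d by rewrite /d; move: hp; move: (size p) => k; lia.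
split; last first.
  have htop : ls_top y' + 1 <= 0 by rewrite /y' /=; move: hp; move: (size p) => k; lia.
  exact (vanish_from_le (@vanish_from_top y') htop).
apply: ls_mul_inv.
  rewrite ls_coefD ls_coefN hy ?ltW // ls_coef_poly ltW // sub0r oppr_eq0 /d /=.
  by rewrite -lead_coefE lead_coef_eq0 -size_poly_gt0 ltnW.
apply: vanish_fromB; first exact: vanish_from_le hy _.
by apply: vanish_from_le (@vanish_from_poly p) _; rewrite /d; move: hp; move: (size p) => k; lia.
Qed.

Lemma conj_eq_floor_sub (x y : LS) (P p : {poly K}) :
  ord_pos y -> x + y ≡ ls_poly P -> is_floor x p -> y ≡ ls_poly p - x.
Proof.
move=> hy e hp; have hP : is_floor x P.
  change (vanish_from (x - ls_poly P) 0); rewrite -e.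
  have -> : x - (x + y) ≡ - y by ring.
  exact: vanish_fromN hy.
by rewrite -(is_floor_unique hP hp (ls_eq_refl x)) -e; ring.
Qed.

Fixpoint conj_seq (beta : LS) (b : nat -> {poly K}) (n : nat) : LS :=
  if n is n'.+1 then ls_inv (conj_seq beta b n' - ls_poly (b n'))%LS (size (b n')).-1 else beta.

Section ConjSeq.
Variables (beta : LS) (b : nat -> {poly K}).
Hypotheses (beta_pos : ord_pos beta) (b_nonconst : forall n, (1 < size (b n))%N).

Lemma conj_seq_ord_pos n : ord_pos (conj_seq beta b n).
Proof. by elim: n => // n IH; case: (inv_sub_nonconst IH (b_nonconst n)). Qed.

Lemma conj_seq_recurrence : cf_recurrence (conj_seq beta b) b.
Proof. by move=> n; case: (inv_sub_nonconst (conj_seq_ord_pos n) (b_nonconst n)). Qed.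

End ConjSeq.

Definition alt_pow (mu : K) (n : nat) := if odd n then mu^-1 else mu.

Lemma alt_powS mu n : mu != 0%R -> (alt_pow mu n * alt_pow mu n.+1 = 1)%R.
Proof. by move=> hmu; rewrite /alt_pow /=; case: (odd n); rewrite ?mulVf ?mulfV. Qed.

Lemma cf_quasi_periodic_tail (x : nat -> LS) (b : nat -> {poly K}) (mu : K) (m l : nat) :
  mu != 0%R -> (forall n, is_floor (x n) (b n)) -> cf_recurrence x b ->
  (forall n, (m <= n)%N -> b n = alt_pow mu n *: b (n + l)%N) ->
  forall n, (m <= n)%N -> x n ≡ ls_cst (alt_pow mu n) * x (n + l)%N.
Proof.
move=> hmu hx ex hb n hn.
pose y k := (ls_cst (alt_pow mu (n + k)) * x (n + k + l)%N)%LS.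
have ey k : y k - ls_poly (b (n + k)%N) ≡
    ls_cst (alt_pow mu (n + k)) * (x (n + k + l)%N - ls_poly (b (n + k + l)%N)).
  by rewrite /y (hb (n + k)%N) ?ls_polyZ; [ring | lia].
suff : x (n + 0)%N ≡ y 0%N by rewrite /y !addn0.
apply: (@cf_head_unique (fun k => x (n + k)%N) y (fun k => b (n + k)%N)) => k /=.
- exact: hx.
- change (vanish_from (y k - ls_poly (b (n + k)%N)) 0); rewrite ey.
  by apply: vanish_from_le (vanish_fromM (vanish_from_cst _) (hx _)) _.
- by rewrite addnS; exact: ex.
- rewrite ey /y addnS addSn.
  transitivity (ls_cst (alt_pow mu (n + k)) * ls_cst (alt_pow mu (n + k).+1) *
    ((x (n + k + l)%N - ls_poly (b (n + k + l)%N)) * x (n + k + l).+1))%LS; first by ring.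
  by rewrite ls_cst_inv ?alt_powS // ex; ring.
Qed.

(* [c u - v] is a polynomial of positive order, hence zero. *)
Lemma conj_back_step (u u' v v' : LS) (p q : {poly K}) (c c' : K) : (c * c' = 1)%R ->
  ord_pos u -> ord_pos v -> (u - ls_poly p) * u' ≡ 1 -> (v - ls_poly q) * v' ≡ 1 ->
  u' ≡ ls_cst c * v' -> p = c' *: q /\ u ≡ ls_cst c' * v.
Proof.
move=> hc hu hv eu ev e; rewrite e in eu.
set W := (ls_cst c * (u - ls_poly p) - (v - ls_poly q))%LS.
have W0 : W ≡ 0.
  transitivity (W * ((v - ls_poly q) * v'))%LS; first by rewrite ev; ring.
  transitivity ((v - ls_poly q) * ((u - ls_poly p) * (ls_cst c * v')) -
                (v - ls_poly q) * ((v - ls_poly q) * v'))%LS; first by rewrite /W; ring.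
  by rewrite eu ev; ring.
have Z : ls_cst c * u - v ≡ ls_poly (c *: p - q)%R.
  by transitivity (ls_cst c * u - v - W)%LS; [rewrite W0; ring | rewrite /W; push_ls_poly; ring].
have hc' : (c' * c = 1)%R by rewrite mulrC.
have P0 : (c *: p - q = 0)%R.
  apply: ls_poly_eq0; rewrite -Z; apply: vanish_fromB; last exact: hv.
  exact: vanish_from_le (vanish_fromM (vanish_from_cst c) hu) _.
split; first by move/eqP: P0; rewrite subr_eq0 => /eqP <-; rewrite scalerA hc' scale1r.
transitivity (ls_cst c' * (ls_cst c * u - v) + ls_cst c' * v)%LS.
  by transitivity (ls_cst c' * ls_cst c * u)%LS; [rewrite ls_cst_inv //; ring | ring].
by rewrite Z P0 ls_poly0; ring.
Qed.

Lemma conj_quasi_periodic_from0 (y : nat -> LS) (b : nat -> {poly K}) (mu : K) (m l : nat) :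
  mu != 0%R -> (forall n, ord_pos (y n)) -> cf_recurrence y b ->
  (forall n, (m <= n)%N -> b n = alt_pow mu n *: b (n + l)%N) ->
  y m ≡ ls_cst (alt_pow mu m) * y (m + l)%N ->
  y 0%N ≡ ls_cst mu * y l /\ forall n, b n = alt_pow mu n *: b (n + l)%N.
Proof.
move=> hmu hy ey hb hym.
suff back k : (k <= m)%N -> y (m - k)%N ≡ ls_cst (alt_pow mu (m - k)) * y (m - k + l)%N /\
    forall n, (m - k <= n)%N -> b n = alt_pow mu n *: b (n + l)%N.
  by have [] := back m (leqnn m); rewrite subnn => h0 hall; split=> // n; apply: hall.
elim: k => [|k IH] hk; first by rewrite subn0.
have [IHy IHb] := IH (ltnW hk).
have em : (m - k)%N = (m - k.+1).+1 by lia.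
rewrite em addSn in IHy.
have hc : (alt_pow mu (m - k.+1).+1 * alt_pow mu (m - k.+1) = 1)%R by rewrite mulrC alt_powS.
have [eb ey'] := conj_back_step hc (hy _) (hy _) (ey _) (ey _) IHy.
split=> // n hn; have [->|hne] := eqVneq n (m - k.+1)%N; first exact: eb.
by apply: IHb; lia.
Qed.

(* Galois' reversal: read backwards, the conjugate expansion reproduces [x 1, ..., x l]. *)
Lemma cf_reversal (x y : nat -> LS) (b : nat -> {poly K}) (mu : K) (l : nat) :
  mu != 0%R -> (0 < l)%N -> (forall n, is_floor (x n) (b n)) -> cf_recurrence x b ->
  (forall n, ord_pos (y n)) -> cf_recurrence y b ->
  y 0%N ≡ ls_poly (b 0%N) - x 0%N -> y 0%N ≡ ls_cst mu * y l ->
  forall k, (k < l)%N ->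
  ls_poly (b (l - k.+1)%N) - y (l - k.+1)%N ≡ ls_cst (alt_pow mu k) * x k.+1.
Proof.
move=> hmu hl hx ex hy ey hxy0 hy0; elim=> [|k IH] hk.
  have ey' := ey (l - 1)%N; rewrite (_ : (l - 1).+1 = l) in ey'; last by lia.
  have E : x 0%N - ls_poly (b 0%N) ≡ - (ls_cst mu * y l) by rewrite -hy0 hxy0; ring.
  set B := (ls_poly (b (l - 1)%N) - y (l - 1)%N)%LS.
  transitivity (B * ((x 0%N - ls_poly (b 0%N)) * x 1%N))%LS; first by rewrite ex; ring.
  rewrite E; transitivity (ls_cst mu * x 1%N *
    ((y (l - 1)%N - ls_poly (b (l - 1)%N)) * y l))%LS; first by rewrite /B; ring.
  by rewrite ey'; rewrite /alt_pow /=; ring.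
have ej : (l - k.+2).+1 = (l - k.+1)%N by lia.
have IH' := IH (ltnW hk); rewrite -ej in IH'.
set j := (l - k.+2)%N in ej IH' *; set c := alt_pow mu k in IH' *.
have hbj : b j.+1 = c *: b k.+1.
  apply/eqP; rewrite -subr_eq0; apply/eqP; apply: ls_poly_eq0.
  have -> : ls_poly (b j.+1 - c *: b k.+1)%R ≡
      y j.+1 + ls_cst c * (x k.+1 - ls_poly (b k.+1)).
    transitivity ((ls_poly (b j.+1) - y j.+1) - ls_cst c * x k.+1 +
      (y j.+1 + ls_cst c * (x k.+1 - ls_poly (b k.+1))))%LS; first by push_ls_poly; ring.
    by rewrite IH'; ring.
  apply: vanish_fromD; first exact: hy.
  exact: vanish_from_le (vanish_fromM (vanish_from_cst c) (hx k.+1)) _.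
have hyj : y j.+1 ≡ - (ls_cst c * (x k.+1 - ls_poly (b k.+1))).
  transitivity (ls_poly (b j.+1) - (ls_poly (b j.+1) - y j.+1))%LS; first by ring.
  by rewrite IH' hbj ls_polyZ; ring.
have hc : (alt_pow mu k.+1 * c = 1)%R by rewrite /c mulrC alt_powS.
transitivity (ls_cst (alt_pow mu k.+1) * ls_cst c * (ls_poly (b j) - y j) *
    ((x k.+1 - ls_poly (b k.+1)) * x k.+2))%LS; first by rewrite ls_cst_inv // ex; ring.
transitivity (ls_cst (alt_pow mu k.+1) * x k.+2 * ((y j - ls_poly (b j)) *
    - (ls_cst c * (x k.+1 - ls_poly (b k.+1)))))%LS; first by ring.
by rewrite -hyj ey; ring.
Qed.

Lemma cf_reversal_sqr (x y : nat -> LS) (b : nat -> {poly K}) (mu : K) (l : nat) :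
  mu != 0%R -> (0 < l)%N -> ~~ odd l -> (forall n, is_floor (x n) (b n)) -> cf_recurrence x b ->
  (forall n, ord_pos (y n)) -> cf_recurrence y b ->
  y 0%N ≡ ls_poly (b 0%N) - x 0%N -> y 0%N ≡ ls_cst mu * y l ->
  b 0%N = mu *: b l -> b l != 0%R -> (mu * mu = 1)%R.
Proof.
move=> hmu hl hl_even hx ex hy ey hxy0 hy0 hb0 hbl.
have hk : (l.-1 < l)%N by lia.
have := cf_reversal hmu hl hx ex hy ey hxy0 hy0 hk.
have e0 : (l - l.-1.+1)%N = 0%N by lia.
have el : l.-1.+1 = l by lia.
rewrite e0 el.
have hodd : odd l.-1 by move: hl_even; rewrite -el /= negbK.
rewrite /alt_pow hodd.
move=> e; have ex0 : x 0%N ≡ ls_cst mu^-1 * x l by rewrite -e hxy0; ring.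
have : b 0%N = mu^-1 *: b l.
  apply: (is_floor_unique (hx 0%N) _ ex0).
  change (vanish_from (ls_cst mu^-1 * x l - ls_poly (mu^-1 *: b l)%R)%LS 0).
  rewrite ls_polyZ; have -> : ls_cst mu^-1 * x l - ls_cst mu^-1 * ls_poly (b l) ≡
      ls_cst mu^-1 * (x l - ls_poly (b l)) by ring.
  exact: vanish_from_le (vanish_fromM (vanish_from_cst _) (hx l)) _.
rewrite hb0 => /eqP; rewrite -subr_eq0 -scalerBl scaler_eq0 (negbTE hbl) orbF subr_eq0.
by move/eqP=> emu; rewrite {1}emu mulVf.
Qed.

Lemma pure_periodic_of_alt_pow (b : nat -> {poly K}) (mu : K) (l : nat) :
  mu != 0%R -> (0 < l)%N -> odd l \/ (mu * mu = 1)%R ->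
  (forall n, b n = alt_pow mu n *: b (n + l)%N) -> pure_periodic b.
Proof.
move=> hmu hl hmu2 hb; exists (l + l)%N; split; first by rewrite addn_gt0 hl.
move=> n; rewrite (hb n) (hb (n + l)%N) scalerA addnA.
suff -> : (alt_pow mu n * alt_pow mu (n + l) = 1)%R by rewrite scale1r.
rewrite /alt_pow oddD; case: hmu2 => [-> | hsqr].
  by case: (odd n); rewrite /= ?mulVf ?mulfV.
have hinv : mu^-1 = mu by rewrite -[mu^-1]mul1r -hsqr mulfK.
by rewrite hinv; case: (odd n); case: (odd l).
Qed.

End LaurentSeries.

(* The hypotheses on the characteristic, the degree and the leading coefficient of [D]
   only guarantee that [sqrtD] exists. *)
Theorem mainTheorem13 (K : fieldType) (D : {poly K}) (sqrtD alpha : LS K)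
    (A : nat -> LS K) (a : nat -> {poly K}) :
  (2%:R : K) != 0 ->
  ~ (exists p : {poly K}, D = p * p) ->
  ~~ odd (size D).-1 ->
  (exists c : K, lead_coef D = c * c) ->
  ls_eq (ls_mul sqrtD sqrtD) (ls_poly D) ->
  (exists beta : LS K,
      sigma_conj sqrtD alpha beta /\
      (ord_pos beta /\ ord_neg alpha) /\
      ls_is_poly (ls_add alpha beta)) ->
  cf_expansion alpha A a ->
  quasi_periodic a ->
  pure_periodic a.
Proof.
move=> _ hD _ _ hs [beta [hconj [[hbeta halpha] [P hP]]]] [hA0 [hfloor hrec]]
  [m [l [mu [hl [hmu hq]]]]].
have hA0_unbounded : ~ vanish_from (A 0%N) 1 by rewrite hA0; exact: ord_neg_not_vanish.
have hsize := cf_partial_quotient_nonconst hA0_unbounded hfloor hrec.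
pose y := conj_seq beta a.
have hy := conj_seq_ord_pos hbeta hsize; have ey := conj_seq_recurrence hbeta hsize.
have hconj_n := sigma_conj_seq hs (sigma_conj_eql hconj (ls_eq_sym hA0)) hrec ey.
have hAm := cf_quasi_periodic_tail hmu hfloor hrec hq (leqnn m).
have hym : y m ≡ ls_cst (alt_pow mu m) * y (m + l)%N.
  exact (sigma_conj_unique hD hs (hconj_n m)
    (sigma_conj_eql (sigma_conjZ _ (hconj_n (m + l)%N)) (ls_eq_sym hAm))).
have [hy0 hq0] := conj_quasi_periodic_from0 hmu hy ey hq hym.
apply: (pure_periodic_of_alt_pow hmu hl _ hq0).
have [|hl_even] := boolP (odd l); [by left | right].
have hxy0 : y 0%N ≡ ls_poly (a 0%N) - A 0%N.
  by apply: conj_eq_floor_sub hbeta _ (hfloor 0%N); rewrite hA0.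
apply: cf_reversal_sqr hmu hl hl_even hfloor hrec hy ey hxy0 hy0 (hq0 0%N) _.
by apply: contraTneq (hsize l) => ->; rewrite size_poly0.
Qed.
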